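(* Let $0<\lambda\le\lambda_0$. Let $\boldsymbol\alpha_0^\star$ be the optimal solution of $\max_{\boldsymbol\alpha\ge\mathbf0}D_{\lambda_0}(\boldsymbol\alpha)$, and let $\boldsymbol\alpha_0\in\mathbb R^{2nK}$ and $\epsilon\ge0$ satisfy $\|\boldsymbol\alpha_0-\boldsymbol\alpha_0^\star\|_2\le\epsilon$. Let $\mathbf m^\star$ be the optimal solution of $\min_{\mathbf m\ge\mathbf0}P_\lambda(\mathbf m)$. For $k\in[p]$ define $$\lambda_a=\frac{\lambda_0\big(2\epsilon\|\mathbf C_{k,:}\|_2+\|\boldsymbol\alpha_0\|_2\|\mathbf C_{k,:}\|_2+\mathbf C_{k,:}\boldsymbol\alpha_0\big)}{2\lambda_0+\|\boldsymbol\alpha_0\|_2\|\mathbf C_{k,:}\|_2-\mathbf C_{k,:}\boldsymbol\alpha_0}.$$ If $\lambda_a\le\lambda\le\lambda_0$, then $m^\star_k=0$.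
   Context: Let $n,K,p\ge1$ be integers, $[n]=\{1,\dots,n\}$. For each $i\in[n]$ let $\mathbf x_i\in\mathbb R^p$ have nonnegative entries and let $\mathcal D_i,\mathcal S_i\subseteq[n]$ be sets of size $K$. Put $\mathbf c_{ij}=(\mathbf x_i-\mathbf x_j)\circ(\mathbf x_i-\mathbf x_j)$ (entrywise product). Vectors in $\mathbb R^{2nK}$ are indexed by the pairs $(i,l)$, $l\in\mathcal D_i$ (''different-class pairs'') and $(i,j)$, $j\in\mathcal S_i$ (''same-class pairs''). $\mathbf C\in\mathbb R^{p\times2nK}$ has column $\mathbf c_{il}$ for each different-class pair and $-\mathbf c_{ij}$ for each same-class pair; $\mathbf C_{k,:}$ is its $k$-th row. Fix $L\ge U\ge0$, $\eta>0$; let $\mathbf t\in\mathbb R^{2nK}$ have entry $L$ at different-class pairs and $-U$ at same-class pairs; $\ell_s(x)=([s-x]_+)^2$ with $[z]_+=\max\{z,0\}$ (entrywise for vectors); $\mathbf1$ is the all-ones vector. For $\lambda>0$, $$P_\lambda(\mathbf m)=\sum_{i\in[n]}\Big[\sum_{l\in\mathcal D_i}\ell_L(\mathbf m^\top\mathbf c_{il})+\sum_{j\in\mathcal S_i}\ell_{-U}(-\mathbf m^\top\mathbf c_{ij})\Big]+\lambda\Big(\mathbf m^\top\mathbf1+\frac\eta2\|\mathbf m\|_2^2\Big)\ (\mathbf m\in\mathbb R^p_{\ge0}),$$ $$D_\lambda(\boldsymbol\alpha)=-\frac14\|\boldsymbol\alpha\|_2^2+\mathbf t^\top\boldsymbol\alpha-\frac{\lambda\eta}2\Big\|\frac1{\lambda\eta}[\mathbf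 C\boldsymbol\alpha-\lambda\mathbf1]_+\Big\|_2^2\ (\boldsymbol\alpha\in\mathbb R^{2nK}_{\ge0}).$$ *)

From mathcomp Require Import all_boot all_order all_algebra.
From mathcomp Require Import reals.
Set Implicit Arguments. Unset Strict Implicit. Unset Printing Implicit Defensive.
Import Order.TTheory GRing.Theory Num.Theory.
Local Open Scope ring_scope.

Section Defs.
Variables (R : realType) (n K p : nat).

(* Index set of R^{2nK}: a triple (i, r, b) with i in [n], r < K, and b = true
   for the different-class pair (i, d i r) and b = false for the same-class
   pair (i, s i r).  Here d i, s i : 'I_K -> 'I_n enumerate D_i and S_i. *)
Definition pidx := ('I_n * 'I_K * bool)%type.

Definition partner (d s : 'I_n -> 'I_K -> 'I_n) (q : pidx) : 'I_n :=
  if q.2 then d q.1.1 q.1.2 else s q.1.1 q.1.2.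

Definition cvec (x : 'I_n -> 'I_p -> R) (i j : 'I_n) (k : 'I_p) : R :=
  (x i k - x j k) ^+ 2.

Definition Cmat (x : 'I_n -> 'I_p -> R) (d s : 'I_n -> 'I_K -> 'I_n)
  (k : 'I_p) (q : pidx) : R :=
  if q.2 then cvec x q.1.1 (partner d s q) k else - cvec x q.1.1 (partner d s q) k.

Definition tvec (L U : R) (q : pidx) : R := if q.2 then L else - U.

Definition pos_part (z : R) : R := Num.max z 0.

Definition ell (sh z : R) : R := (pos_part (sh - z)) ^+ 2.

Definition dotp (m : 'I_p -> R) (v : 'I_p -> R) : R := \sum_k m k * v k.

Definition norm2_p (m : 'I_p -> R) : R := Num.sqrt (\sum_k m k ^+ 2).
Definition norm2_q (a : pidx -> R) : R := Num.sqrt (\sum_q a q ^+ 2).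

Definition Crow_mul x d s (k : 'I_p) (a : pidx -> R) : R :=
  \sum_q Cmat x d s k q * a q.

Definition Crow_norm x d s (k : 'I_p) : R := norm2_q (Cmat x d s k).

Definition Pobj x d s (L U eta lam : R) (m : 'I_p -> R) : R :=
  \sum_(i : 'I_n)
     (\sum_(r < K) ell L (dotp m (cvec x i (d i r)))
    + \sum_(r < K) ell (- U) (- dotp m (cvec x i (s i r))))
  + lam * (\sum_k m k + eta / 2 * \sum_k m k ^+ 2).

Definition Dobj x d s (L U eta lam : R) (a : pidx -> R) : R :=
  - (1 / 4) * \sum_q a q ^+ 2 + \sum_q tvec L U q * a q
  - lam * eta / 2 *
      \sum_k ((lam * eta)^-1 * pos_part (Crow_mul x d s k a - lam)) ^+ 2.

Definition lambda_a x d s (lam0 eps : R) (a0 : pidx -> R) (k : 'I_p) : R :=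
  lam0 * (2 * eps * Crow_norm x d s k + norm2_q a0 * Crow_norm x d s k
          + Crow_mul x d s k a0)
  / (2 * lam0 + norm2_q a0 * Crow_norm x d s k - Crow_mul x d s k a0).

End Defs.

From mathcomp Require Import all_boot all_order all_algebra.
From mathcomp Require Import reals.
From mathcomp Require Import ring lra.
Import Order.TTheory GRing.Theory Num.Theory.
Local Open Scope ring_scope.
Set Implicit Arguments. Unset Strict Implicit. Unset Printing Implicit Defensive.

(** The dual objective is [D_lam(alpha) = - |alpha|^2 / 4 + (concave)], so it
    grows quadratically away from its maximiser alpha over the nonnegative
    orthant: [D_lam(b) + |b - alpha|^2 / 4 <= D_lam(alpha)].  Splitting the
    duality gap into Fenchel-Young gaps, the KKT conditions of the primal
    minimiser mstar show that [alpha_of mstar = 2 [t - C^T mstar]_+] is this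
    dual maximiser for lam, and that [mstar_k > 0] would force
    [C_{k,:} alpha_of mstar = lam + lam eta mstar_k > lam].  As
    [D_{r lam0}(r beta) = r (D_lam0(beta) + (1 - r) / 4 |beta|^2)] for
    [r = lam / lam0], quadratic growth at the maximisers for lam and lam0
    puts [alpha_of mstar] in the ball of centre [(1 + r) / 2 a0star] and
    radius [(1 - r) / 2 |a0star|].  By Cauchy-Schwarz, and since a0star is
    within eps of a0, [C_{k,:}] stays below lam on that ball once
    [lam >= lambda_a]. *)

Section PosPart.
Variable R : realType.
Implicit Types a b c h t z : R.

Variant pos_part_spec z : R -> Type :=
  | PosPartNonneg of 0 <= z : pos_part_spec z z
  | PosPartNeg of z < 0 : pos_part_spec z 0.

Lemma pos_partP z : pos_part_spec z (pos_part z).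
Proof. by rewrite /pos_part maxElt; case: ltP => h; constructor. Qed.

Lemma pos_part_ge0 z : 0 <= pos_part z.
Proof. by case: pos_partP. Qed.

Lemma ler_pos_part z : z <= pos_part z.
Proof. by case: pos_partP => // /ltW. Qed.

Lemma ger0_pos_part z : 0 <= z -> pos_part z = z.
Proof. exact: max_l. Qed.

Lemma ler0_pos_part z : z <= 0 -> pos_part z = 0.
Proof. exact: max_r. Qed.

Lemma pos_partZ c z : 0 <= c -> pos_part (c * z) = c * pos_part z.
Proof.
move=> c_ge0; case: (pos_partP z) => [z_ge0|z_lt0].
  by rewrite ger0_pos_part ?mulr_ge0.
by rewrite mulr0 ler0_pos_part //; apply: mulr_ge0_le0 => //; apply: ltW.
Qed.

Lemma sqr_pos_partD_le z h :
  pos_part (z + h) ^+ 2 <= pos_part z ^+ 2 + 2 * pos_part z * h + h ^+ 2.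
Proof. by case: (pos_partP z) => ?; case: (pos_partP (z + h)) => ?; nra. Qed.

Lemma pos_part_convex a b t : 0 <= t <= 1 ->
  pos_part ((1 - t) * a + t * b) <= (1 - t) * pos_part a + t * pos_part b.
Proof.
move=> /andP[t_ge0 t_le1].
have := ler_pos_part a; have := ler_pos_part b.
have := pos_part_ge0 a; have := pos_part_ge0 b.
set A := pos_part a; set B := pos_part b => B_ge0 A_ge0 b_le a_le.
by rewrite /pos_part ge_max; apply/andP; split; nra.
Qed.

Lemma sqr_pos_part_convex a b t : 0 <= t <= 1 ->
  pos_part ((1 - t) * a + t * b) ^+ 2
    <= (1 - t) * pos_part a ^+ 2 + t * pos_part b ^+ 2.
Proof.
move=> t01; have := pos_part_convex a b t01; move: t01 => /andP[t_ge0 t_le1].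
have := pos_part_ge0 ((1 - t) * a + t * b).
have := pos_part_ge0 a; have := pos_part_ge0 b.
set u := pos_part (_ + _); set A := pos_part a; set B := pos_part b => B0 A0 u0 u_le.
apply: (le_trans (y := ((1 - t) * A + t * B) ^+ 2)); first by rewrite ler_sqr ?nnegrE //; nra.
have : 0 <= t * (1 - t) * (A - B) ^+ 2 by rewrite mulr_ge0 ?sqr_ge0 ?mulr_ge0 ?subr_ge0.
nra.
Qed.

End PosPart.

Lemma sum_sqr_lincomb (R : comPzRingType) (I : finType) (u v : I -> R) a b :
  \sum_i (a * u i + b * v i) ^+ 2 =
  a ^+ 2 * \sum_i u i ^+ 2 + 2 * a * b * \sum_i u i * v i + b ^+ 2 * \sum_i v i ^+ 2.
Proof.
rewrite !mulr_sumr -!big_split /=; apply: eq_bigr => i _; ring.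
Qed.

Section RealField.
Variable R : realFieldType.
Implicit Types a b c e : R.

Lemma first_order_ge0 a b e : 0 < e ->
  (forall t, 0 < t -> t <= e -> 0 <= a * t + b * t ^+ 2) -> 0 <= a.
Proof.
move=> e_gt0 ge0_near0; rewrite leNgt; apply/negP => a_lt0.
have nb_gt0 : 0 < `|b| + 1 by rewrite ltr_wpDl.
pose t := Num.min e (- a / (`|b| + 1)).
have t_gt0 : 0 < t by rewrite lt_min e_gt0 divr_gt0 ?oppr_gt0.
have t_le_e : t <= e by rewrite ge_min lexx.
have t_small : t * (`|b| + 1) <= - a.
  by rewrite -ler_pdivlMr // ge_min lexx orbT.
have bt2 : b * t ^+ 2 <= `|b| * t ^+ 2 by rewrite ler_wpM2r ?sqr_ge0 ?ler_norm.
have := ge0_near0 t t_gt0 t_le_e; nra.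
Qed.

Lemma sum_sqr_ge0 (I : finType) (u : I -> R) : 0 <= \sum_i u i ^+ 2.
Proof. by apply: sumr_ge0 => i _; apply: sqr_ge0. Qed.

Lemma cauchy_schwarz_sqr (I : finType) (u v : I -> R) :
  (\sum_i u i * v i) ^+ 2 <= (\sum_i u i ^+ 2) * (\sum_i v i ^+ 2).
Proof.
set A := \sum_i u i ^+ 2; set B := \sum_i u i * v i; set C := \sum_i v i ^+ 2.
have A_ge0 : 0 <= A := sum_sqr_ge0 u.
have [A_gt0|A_le0] := ltP 0 A.
  have := sum_sqr_ge0 (fun i => B * u i + - A * v i).
  rewrite sum_sqr_lincomb -/A -/B -/C => h.
  have : 0 <= A * (A * C - B ^+ 2) by nra.
  by rewrite pmulr_rge0 // subr_ge0.
have A0 : A = 0 by apply/le_anti/andP.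
have u0 i : u i = 0.
  apply/eqP; rewrite -sqrf_eq0; apply/eqP.
  by apply: (psumr_eq0P _ A0) => // j _; apply: sqr_ge0.
have -> : B = 0 by rewrite /B big1 // => i _; rewrite u0 mul0r.
by rewrite A0 expr0n mul0r.
Qed.

Lemma growth_at_max_of_strongly_concave (I : finType) (G : (I -> R) -> R) (a b : I -> R) :
  (forall t, 0 < t -> t <= 1 -> G (fun i => (1 - t) * a i + t * b i) <= G a) ->
  (forall t, 0 < t -> t <= 1 ->
     (1 - t) * (G a + (\sum_i a i ^+ 2) / 4) + t * (G b + (\sum_i b i ^+ 2) / 4)
     <= G (fun i => (1 - t) * a i + t * b i)
        + (\sum_i ((1 - t) * a i + t * b i) ^+ 2) / 4) ->
  G b + (\sum_i (b i - a i) ^+ 2) / 4 <= G a.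
Proof.
move=> a_max concave.
set A2 := \sum_i a i ^+ 2; set B2 := \sum_i b i ^+ 2; set AB := \sum_i a i * b i.
have dist2 : \sum_i (b i - a i) ^+ 2 = B2 - 2 * AB + A2.
  rewrite -[LHS](_ : \sum_i ((- 1) * a i + 1 * b i) ^+ 2 = _); last first.
    by apply: eq_bigr => i _; ring.
  rewrite sum_sqr_lincomb -/A2 -/B2 -/AB; ring.
have slope : 0 <= (G a - G b + (AB - A2) / 2 + (A2 - B2) / 4).
  apply: (@first_order_ge0 _ ((B2 - 2 * AB + A2) / 4) 1) => // t t_gt0 t_le1.
  have := concave t t_gt0 t_le1; have := a_max t t_gt0 t_le1.
  rewrite sum_sqr_lincomb -/A2 -/B2 -/AB; nra.
rewrite dist2; lra.
Qed.

Lemma screening_bound (lam lam0 eps N n0 ca0 cA : R) :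
  let r := lam / lam0 in
  0 < lam -> lam <= lam0 -> ca0 <= n0 * N ->
  lam0 * (2 * eps * N + n0 * N + ca0) / (2 * lam0 + n0 * N - ca0) <= lam ->
  cA <= (1 + r) / 2 * (ca0 + N * eps) + N * ((1 - r) / 2 * (n0 + eps)) -> cA <= lam.
Proof.
move=> r lam_gt0 le_lam ca0_le.
have lam0_gt0 : 0 < lam0 by apply: lt_le_trans le_lam.
have den_gt0 : 0 < 2 * lam0 + n0 * N - ca0 by lra.
have r_lam0 : r * lam0 = lam by rewrite /r divfK ?gt_eqF.
rewrite ler_pdivrMr // => lam_a_le.
have {}lam_a_le : 2 * eps * N + n0 * N + ca0 <= r * (2 * lam0 + n0 * N - ca0).
  by rewrite -(ler_pM2l lam0_gt0) mulrA [lam0 * r]mulrC r_lam0.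
rewrite -r_lam0; lra.
Qed.

End RealField.

Section RealClosed.
Variables (R : rcfType) (I : finType).
Implicit Types u v : I -> R.

Lemma cauchy_schwarz u v :
  `|\sum_i u i * v i| <= Num.sqrt (\sum_i u i ^+ 2) * Num.sqrt (\sum_i v i ^+ 2).
Proof.
by rewrite -sqrtrM ?sum_sqr_ge0 // -sqrtr_sqr ler_wsqrtr // cauchy_schwarz_sqr.
Qed.

Lemma minkowski u v :
  Num.sqrt (\sum_i (u i + v i) ^+ 2)
    <= Num.sqrt (\sum_i u i ^+ 2) + Num.sqrt (\sum_i v i ^+ 2).
Proof.
have := cauchy_schwarz u v; have := ler_norm (\sum_i u i * v i).
have := sqr_sqrtr (sum_sqr_ge0 u); have := sqr_sqrtr (sum_sqr_ge0 v).
have := sqrtr_ge0 (\sum_i u i ^+ 2); have := sqrtr_ge0 (\sum_i v i ^+ 2).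
set su := Num.sqrt (\sum_i u i ^+ 2); set sv := Num.sqrt (\sum_i v i ^+ 2).
move=> sv_ge0 su_ge0 sv2 su2 uv_le_norm cs.
rewrite -[su + sv]ger0_norm ?addr_ge0 // -sqrtr_sqr ler_wsqrtr //.
rewrite (eq_bigr (fun i => (1 * u i + 1 * v i) ^+ 2)) => [|i _]; last by rewrite !mul1r.
rewrite sum_sqr_lincomb; nra.
Qed.

Lemma norm_le_add_dist u v :
  Num.sqrt (\sum_i v i ^+ 2)
    <= Num.sqrt (\sum_i u i ^+ 2) + Num.sqrt (\sum_i (u i - v i) ^+ 2).
Proof.
rewrite (eq_bigr (fun i => (u i + - (u i - v i)) ^+ 2)) => [|i _]; last first.
  by congr (_ ^+ 2); ring.
apply: le_trans (minkowski _ _) _; rewrite lerD2l.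
by under eq_bigr do rewrite sqrrN.
Qed.

End RealClosed.

Lemma sum_if_eq (V : nmodType) (I : finType) (F : I -> V) (j : I) :
  \sum_i (if i == j then F i else 0) = F j.
Proof. by rewrite -big_mkcond big_pred1_eq. Qed.

Section Duality.
Variables (R : realType) (n K p : nat) (x : 'I_n -> 'I_p -> R)
  (d s : 'I_n -> 'I_K -> 'I_n) (L U eta : R).
Hypothesis eta_gt0 : 0 < eta.
Local Notation Q := (pidx n K).
Local Notation C := (Cmat x d s).
Local Notation Crow := (Crow_mul x d s).
Local Notation P := (Pobj x d s L U eta).
Local Notation D := (Dobj x d s L U eta).
Implicit Types (lam h : R) (m : 'I_p -> R) (a b : Q -> R).

Lemma big_pidx (F : Q -> R) :
  \sum_q F q =
  \sum_(i : 'I_n) (\sum_(r < K) F (i, r, true) + \sum_(r < K) F (i, r, false)).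
Proof.
have -> : \sum_q F q = \sum_(ir : 'I_n * 'I_K) \sum_(c : bool) F (ir, c).
  by rewrite (pair_bigA _ (fun ir c => F (ir, c))); apply: eq_bigr => -[].
have -> : \sum_(ir : 'I_n * 'I_K) \sum_(c : bool) F (ir, c)
          = \sum_(i : 'I_n) \sum_(r < K) \sum_(c : bool) F (i, r, c).
  by rewrite (pair_bigA _ (fun i r => \sum_(c : bool) F (i, r, c))); apply: eq_bigr => -[].
apply: eq_bigr => i _.
by rewrite -big_split; apply: eq_bigr => r _; rewrite big_bool.
Qed.

Definition resid m q := tvec L U q - \sum_j m j * C j q.

Lemma PobjE lam m :
  P lam m = \sum_q pos_part (resid m q) ^+ 2
            + lam * (\sum_j m j + eta / 2 * \sum_j m j ^+ 2).
Proof.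
rewrite /Pobj big_pidx; congr (_ + _); apply: eq_bigr => i _.
congr (_ + _); apply: eq_bigr => r _; rewrite /ell /resid /dotp /Cmat /tvec //=.
by rewrite -sumrN; congr (pos_part (_ - _) ^+ 2); apply: eq_bigr => j _; rewrite mulrN.
Qed.

Definition alpha_of m q := 2 * pos_part (resid m q).

Definition Pobj_grad lam m j := lam + lam * eta * m j - Crow j (alpha_of m).

Definition perturb m j h i := m i + (if i == j then h else 0).

Lemma resid_perturb m j h q : resid (perturb m j h) q = resid m q - h * C j q.
Proof.
rewrite /resid; have -> : \sum_i perturb m j h i * C i q
          = \sum_i m i * C i q + \sum_i (if i == j then h * C i q else 0).
  by rewrite -big_split; apply: eq_bigr => i _; rewrite /perturb; case: eqP => _ /=; ring.
by rewrite sum_if_eq; ring.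
Qed.

Lemma Pobj_perturb_le lam m j h :
  P lam (perturb m j h) <= P lam m + h * Pobj_grad lam m j
                           + h ^+ 2 * (\sum_q C j q ^+ 2 + lam * eta / 2).
Proof.
rewrite !PobjE /Pobj_grad /Crow_mul.
have loss : \sum_q pos_part (resid (perturb m j h) q) ^+ 2 <=
    \sum_q (pos_part (resid m q) ^+ 2 - h * (C j q * alpha_of m q) + h ^+ 2 * C j q ^+ 2).
  apply: ler_sum => q _; rewrite resid_perturb.
  by apply: le_trans (sqr_pos_partD_le _ _) _; rewrite /alpha_of le_eqVlt; apply/orP; left; apply/eqP; ring.
rewrite !big_split /= sumrN -!mulr_sumr in loss.
have sum1 : \sum_i perturb m j h i = \sum_i m i + h.
  by rewrite big_split /= (sum_if_eq (fun=> h)).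
have sum2 : \sum_i perturb m j h i ^+ 2 = \sum_i m i ^+ 2 + (2 * h * m j + h ^+ 2).
  rewrite -(sum_if_eq (fun i => 2 * h * m i + h ^+ 2) j) -big_split /=.
  by apply: eq_bigr => i _; rewrite /perturb; case: eqP => _ /=; ring.
rewrite sum1 sum2; lra.
Qed.

Lemma perturb_ge0 m j h : (forall i, 0 <= m i) -> 0 <= m j + h ->
  forall i, 0 <= perturb m j h i.
Proof. by move=> m_ge0 mjh_ge0 i; rewrite /perturb; case: eqP => [->|_]; rewrite ?addr0. Qed.

Lemma Pobj_min_kkt lam m : (forall i, 0 <= m i) ->
  (forall m', (forall i, 0 <= m' i) -> P lam m <= P lam m') ->
  forall j, 0 <= Pobj_grad lam m j /\ (0 < m j -> Pobj_grad lam m j = 0).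
Proof.
move=> m_ge0 m_min j.
set g := Pobj_grad lam m j; set c := \sum_q C j q ^+ 2 + lam * eta / 2.
have ge0_step h : 0 <= m j + h -> 0 <= g * h + c * h ^+ 2.
  move=> mjh_ge0; have := m_min _ (perturb_ge0 m_ge0 mjh_ge0).
  have := Pobj_perturb_le lam m j h; rewrite -/g -/c; lra.
have g_ge0 : 0 <= g.
  apply: (@first_order_ge0 _ _ c _ ltr01) => t t_gt0 _.
  by apply: ge0_step; rewrite addr_ge0 ?m_ge0 ?ltW.
split=> // mj_gt0; apply/le_anti; rewrite g_ge0 andbT -oppr_ge0.
apply: (@first_order_ge0 _ _ c _ mj_gt0) => t t_gt0 t_le.
have := ge0_step (- t); rewrite sqrrN subr_ge0 => /(_ t_le); lra.
Qed.

(* [P lam m - D lam b] splits into Fenchel-Young gaps of the squared hinge loss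
   and of the regulariser; both are nonnegative and vanish at [(m, alpha_of m)]
   when m satisfies the KKT conditions. *)
Definition loss_gap (z c : R) := pos_part z ^+ 2 - c * z + c ^+ 2 / 4.

Definition reg_gap lam (mj c : R) :=
  lam * mj + lam * eta / 2 * mj ^+ 2 - mj * c
  + lam * eta / 2 * ((lam * eta)^-1 * pos_part (c - lam)) ^+ 2.

Lemma Pobj_sub_Dobj lam m b :
  P lam m - D lam b =
  \sum_q loss_gap (resid m q) (b q) + \sum_j reg_gap lam (m j) (Crow j b).
Proof.
have cross : \sum_q b q * resid m q
             = \sum_q tvec L U q * b q - \sum_j m j * Crow j b.
  under eq_bigr => q _ do rewrite /resid mulrBr mulr_sumr [b q * _]mulrC.
  rewrite sumrB exchange_big /=; congr (_ - _); apply: eq_bigr => j _.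
  by rewrite /Crow_mul mulr_sumr; apply: eq_bigr => q _; ring.
rewrite /loss_gap /reg_gap PobjE /Dobj !big_split /= !sumrN.
rewrite -!mulr_suml -!mulr_sumr cross; ring.
Qed.

Lemma loss_gap_ge0 z c : 0 <= c -> 0 <= loss_gap z c.
Proof. by have := sqr_ge0 (z - c / 2); rewrite /loss_gap; case: pos_partP => *; nra. Qed.

Lemma loss_gap_alpha z : loss_gap z (2 * pos_part z) = 0.
Proof. by rewrite /loss_gap; case: pos_partP => _; field; rewrite ?pnatr_eq0. Qed.

Lemma reg_gap_ge0 lam mj c : 0 < lam -> 0 <= mj -> 0 <= reg_gap lam mj c.
Proof.
move=> lam_gt0 mj_ge0; rewrite /reg_gap.
have le_gt0 : 0 < lam * eta by rewrite mulr_gt0.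
case: pos_partP => [c_ge|c_lt]; last by rewrite mulr0 expr0n /= mulr0 addr0; nra.
have -> : lam * mj + lam * eta / 2 * mj ^+ 2 - mj * c
          + lam * eta / 2 * ((lam * eta)^-1 * (c - lam)) ^+ 2
        = (lam * eta)^-1 / 2 * (lam * eta * mj - (c - lam)) ^+ 2.
  by field; rewrite !gt_eqF.
by rewrite mulr_ge0 ?sqr_ge0 // divr_ge0 // invr_ge0 ltW.
Qed.

Lemma reg_gap_kkt lam (mj c : R) : 0 < lam -> 0 <= mj ->
  0 <= lam + lam * eta * mj - c -> (0 < mj -> lam + lam * eta * mj - c = 0) ->
  reg_gap lam mj c = 0.
Proof.
move=> lam_gt0 mj_ge0 grad_ge0 grad_eq0; rewrite /reg_gap.
have le_gt0 : 0 < lam * eta by rewrite mulr_gt0.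
have [mj_gt0|mj_le0] := ltP 0 mj.
  have -> : c = lam + lam * eta * mj by have := grad_eq0 mj_gt0; lra.
  have -> : lam + lam * eta * mj - lam = lam * eta * mj by ring.
  rewrite ger0_pos_part ?mulr_ge0 ?ltW // mulKf ?gt_eqF //.
  by field.
have mj0 : mj = 0 by apply/le_anti/andP.
subst mj; rewrite mulr0 addr0 in grad_ge0.
have -> : pos_part (c - lam) = 0 by rewrite ler0_pos_part //; lra.
rewrite !(mulr0, mul0r, expr0n) /=; lra.
Qed.

Lemma weak_duality lam m b : 0 < lam ->
  (forall i, 0 <= m i) -> (forall q, 0 <= b q) -> D lam b <= P lam m.
Proof.
move=> lam_gt0 m_ge0 b_ge0; rewrite -subr_ge0 Pobj_sub_Dobj.
by rewrite addr_ge0 // sumr_ge0 // => *; [apply: loss_gap_ge0 | apply: reg_gap_ge0].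
Qed.

Lemma zero_duality_gap lam m : 0 < lam -> (forall i, 0 <= m i) ->
  (forall j, 0 <= Pobj_grad lam m j /\ (0 < m j -> Pobj_grad lam m j = 0)) ->
  P lam m = D lam (alpha_of m).
Proof.
move=> lam_gt0 m_ge0 kkt; apply/eqP; rewrite -subr_eq0 Pobj_sub_Dobj.
rewrite big1 => [|q _]; last exact: loss_gap_alpha.
by rewrite big1 ?addr0 // => j _; have [] := kkt j; apply: reg_gap_kkt.
Qed.

Lemma alpha_of_ge0 m q : 0 <= alpha_of m q.
Proof. by rewrite mulr_ge0 ?pos_part_ge0. Qed.

Lemma alpha_of_dual_max lam m : 0 < lam -> (forall i, 0 <= m i) ->
  (forall m', (forall i, 0 <= m' i) -> P lam m <= P lam m') ->
  forall b, (forall q, 0 <= b q) -> D lam b <= D lam (alpha_of m).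
Proof.
move=> lam_gt0 m_ge0 m_min b b_ge0.
rewrite -zero_duality_gap //; first exact: weak_duality.
exact: Pobj_min_kkt.
Qed.

Lemma Crow_lin j (c1 c2 : R) a b :
  Crow j (fun q => c1 * a q + c2 * b q) = c1 * Crow j a + c2 * Crow j b.
Proof. by rewrite /Crow_mul !mulr_sumr -big_split; apply: eq_bigr => q _ /=; ring. Qed.

Lemma Crow_scale j (c : R) a : Crow j (fun q => c * a q) = c * Crow j a.
Proof. by rewrite /Crow_mul mulr_sumr; apply: eq_bigr => q _ /=; ring. Qed.

Lemma Dobj_sqr_concave lam a b t : 0 < lam -> 0 <= t <= 1 ->
  (1 - t) * (D lam a + (\sum_q a q ^+ 2) / 4) + t * (D lam b + (\sum_q b q ^+ 2) / 4)
  <= D lam (fun q => (1 - t) * a q + t * b q)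
     + (\sum_q ((1 - t) * a q + t * b q) ^+ 2) / 4.
Proof.
move=> lam_gt0 t01.
pose hinge v := \sum_k ((lam * eta)^-1 * pos_part (Crow k v - lam)) ^+ 2.
have DE v : D lam v + (\sum_q v q ^+ 2) / 4
            = \sum_q tvec L U q * v q - lam * eta / 2 * hinge v.
  by rewrite /Dobj /hinge; ring.
have hinge_convex : hinge (fun q => (1 - t) * a q + t * b q)
                    <= (1 - t) * hinge a + t * hinge b.
  rewrite /hinge !mulr_sumr -big_split /=; apply: ler_sum => k _.
  have -> : Crow k (fun q => (1 - t) * a q + t * b q) - lam
            = (1 - t) * (Crow k a - lam) + t * (Crow k b - lam) by rewrite Crow_lin; ring.
  have := sqr_pos_part_convex (Crow k a - lam) (Crow k b - lam) t01.
  move/(ler_wpM2l (sqr_ge0 (lam * eta)^-1)); rewrite !exprMn; lra.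
have k_ge0 : 0 <= lam * eta / 2 by rewrite divr_ge0 // mulr_ge0 // ltW.
rewrite !DE; have := ler_wpM2l k_ge0 hinge_convex.
have -> : \sum_q tvec L U q * ((1 - t) * a q + t * b q)
          = (1 - t) * \sum_q tvec L U q * a q + t * \sum_q tvec L U q * b q.
  by rewrite !mulr_sumr -big_split; apply: eq_bigr => q _ /=; ring.
lra.
Qed.

Lemma Dobj_growth_at_max lam a : 0 < lam -> (forall q, 0 <= a q) ->
  (forall b, (forall q, 0 <= b q) -> D lam b <= D lam a) ->
  forall b, (forall q, 0 <= b q) ->
  D lam b + (\sum_q (b q - a q) ^+ 2) / 4 <= D lam a.
Proof.
move=> lam_gt0 a_ge0 a_max b b_ge0.
apply: growth_at_max_of_strongly_concave => t t_gt0 t_le1.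
  by apply: a_max => q; rewrite addr_ge0 // mulr_ge0 ?subr_ge0 // ltW.
by apply: Dobj_sqr_concave; rewrite // ltW.
Qed.

Lemma Dobj_scale lam (c : R) a : 0 < c -> 0 < lam ->
  D (c * lam) (fun q => c * a q)
  = c * (D lam a + (1 - c) / 4 * \sum_q a q ^+ 2).
Proof.
move=> c_gt0 lam_gt0; rewrite /Dobj.
have -> : \sum_k ((c * lam * eta)^-1 * pos_part (Crow k (fun q => c * a q) - c * lam)) ^+ 2
          = \sum_k ((lam * eta)^-1 * pos_part (Crow k a - lam)) ^+ 2.
  apply: eq_bigr => k _; rewrite Crow_scale -mulrBr pos_partZ ?ltW //.
  by congr (_ ^+ 2); field; rewrite !gt_eqF.
under eq_bigr => q _ do rewrite exprMn.
under [X in _ + X - _]eq_bigr => q _ do rewrite mulrCA.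
by rewrite -!mulr_sumr; ring.
Qed.

Lemma Dobj_growth_at_max_scaled lam (c : R) a b : 0 < c -> 0 < lam ->
  (forall q, 0 <= a q) ->
  (forall b', (forall q, 0 <= b' q) -> D (c * lam) b' <= D (c * lam) a) ->
  (forall q, 0 <= b q) ->
  c * (D lam b + (1 - c) / 4 * \sum_q b q ^+ 2) + (\sum_q (c * b q - a q) ^+ 2) / 4
  <= D (c * lam) a.
Proof.
move=> c_gt0 lam_gt0 a_ge0 a_max b_ge0; rewrite -Dobj_scale //.
apply: Dobj_growth_at_max => //; first by rewrite mulr_gt0.
by move=> q; rewrite mulr_ge0 ?b_ge0 ?ltW.
Qed.

Lemma dual_max_ball lam lam0 a a0 : 0 < lam -> lam <= lam0 ->
  (forall q, 0 <= a q) -> (forall b, (forall q, 0 <= b q) -> D lam b <= D lam a) ->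
  (forall q, 0 <= a0 q) -> (forall b, (forall q, 0 <= b q) -> D lam0 b <= D lam0 a0) ->
  norm2_q (fun q => a q - (1 + lam / lam0) / 2 * a0 q)
  <= (1 - lam / lam0) / 2 * norm2_q a0.
Proof.
move=> lam_gt0 le_lam a_ge0 a_max a0_ge0 a0_max.
have lam0_gt0 : 0 < lam0 by apply: lt_le_trans le_lam.
set r := lam / lam0.
have r_gt0 : 0 < r by rewrite divr_gt0.
have r_le1 : r <= 1 by rewrite ler_pdivrMr // mul1r.
have r_lam0 : r * lam0 = lam by rewrite divfK ?gt_eqF.
have rV_lam : r^-1 * lam = lam0 by rewrite invf_div divfK ?gt_eqF.
set AA := \sum_q a q ^+ 2; set BB := \sum_q a0 q ^+ 2; set AB := \sum_q a q * a0 q.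
have sum_sqr c1 c2 : \sum_q (c1 * a q + c2 * a0 q) ^+ 2
                     = c1 ^+ 2 * AA + 2 * c1 * c2 * AB + c2 ^+ 2 * BB.
  exact: sum_sqr_lincomb.
have near_a : r * (D lam0 a0 + (1 - r) / 4 * BB) + (AA - 2 * r * AB + r ^+ 2 * BB) / 4
              <= D lam a.
  have := Dobj_growth_at_max_scaled r_gt0 lam0_gt0 a_ge0.
  rewrite r_lam0 => /(_ _ a_max a0_ge0); rewrite -/BB.
  rewrite (eq_bigr (fun q => ((-1) * a q + r * a0 q) ^+ 2)) => [|q _]; last first.
    by congr (_ ^+ 2); ring.
  rewrite sum_sqr; lra.
have near_a0 : D lam a + AA / 4 - AB / 2 + r * BB / 4 <= r * D lam0 a0.
  have rV_gt0 : 0 < r^-1 by rewrite invr_gt0.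
  have := Dobj_growth_at_max_scaled rV_gt0 lam_gt0 a0_ge0.
  rewrite rV_lam => /(_ _ a0_max a_ge0); rewrite -/AA.
  rewrite (eq_bigr (fun q => (r^-1 * a q + (-1) * a0 q) ^+ 2)) => [|q _]; last first.
    by congr (_ ^+ 2); ring.
  rewrite sum_sqr => /(ler_wpM2l (ltW r_gt0)).
  have -> : r * (r^-1 * (D lam a + (1 - r^-1) / 4 * AA)
                 + (r^-1 ^+ 2 * AA + 2 * r^-1 * -1 * AB + (-1) ^+ 2 * BB) / 4)
            = D lam a + AA / 4 - AB / 2 + r * BB / 4.
    by field; rewrite gt_eqF.
  done.
have ball_sqr : \sum_q (a q - (1 + r) / 2 * a0 q) ^+ 2 <= ((1 - r) / 2) ^+ 2 * BB.
  rewrite (eq_bigr (fun q => (1 * a q + (- ((1 + r) / 2)) * a0 q) ^+ 2)) => [|q _ /=]; last first.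
    by congr (_ ^+ 2); ring.
  rewrite sum_sqr; lra.
rewrite /norm2_q -[X in _ <= X * _]ger0_norm ?divr_ge0 ?subr_ge0 //.
by rewrite -sqrtr_sqr -sqrtrM ?sqr_ge0 // ler_wsqrtr.
Qed.

Lemma Crow_lipschitz j a b :
  `|Crow j a - Crow j b| <= Crow_norm x d s j * norm2_q (fun q => a q - b q).
Proof.
have -> : Crow j a - Crow j b = \sum_q C j q * (a q - b q).
  by rewrite /Crow_mul -sumrB; apply: eq_bigr => q _; rewrite mulrBr.
exact: cauchy_schwarz.
Qed.

Lemma Crow_le_norm j a : Crow j a <= norm2_q a * Crow_norm x d s j.
Proof. by rewrite mulrC; apply: le_trans (ler_norm _) (cauchy_schwarz _ _). Qed.

Lemma dual_max_Crow_le lam lam0 eps a a0star a0 j :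
  let r := lam / lam0 in let N := Crow_norm x d s j in
  0 < lam -> lam <= lam0 ->
  (forall q, 0 <= a q) -> (forall b, (forall q, 0 <= b q) -> D lam b <= D lam a) ->
  (forall q, 0 <= a0star q) ->
  (forall b, (forall q, 0 <= b q) -> D lam0 b <= D lam0 a0star) ->
  norm2_q (fun q => a0 q - a0star q) <= eps ->
  Crow j a <= (1 + r) / 2 * (Crow j a0 + N * eps) + N * ((1 - r) / 2 * (norm2_q a0 + eps)).
Proof.
move=> r N lam_gt0 le_lam a_ge0 a_max a0star_ge0 a0star_max a0_near.
have lam0_gt0 : 0 < lam0 by apply: lt_le_trans le_lam.
have r_ge0 : 0 <= r by rewrite divr_ge0 ?ltW.
have r_le1 : r <= 1 by rewrite ler_pdivrMr // mul1r.
have N_ge0 : 0 <= N by apply: sqrtr_ge0.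
have ball := dual_max_ball lam_gt0 le_lam a_ge0 a_max a0star_ge0 a0star_max.
rewrite -/r in ball.
have a_near : Crow j a <= (1 + r) / 2 * Crow j a0star + N * ((1 - r) / 2 * norm2_q a0star).
  have := Crow_lipschitz j a (fun q => (1 + r) / 2 * a0star q).
  rewrite Crow_scale ler_norml -/N => /andP[_ le_dist].
  have := le_trans le_dist (ler_wpM2l N_ge0 ball); lra.
have a0star_near : Crow j a0star <= Crow j a0 + N * eps.
  have := Crow_lipschitz j a0 a0star; rewrite ler_norml -/N => /andP[le_dist _].
  have := ler_wpM2l N_ge0 a0_near; lra.
have a0star_norm : norm2_q a0star <= norm2_q a0 + eps.
  by apply: le_trans (norm_le_add_dist a0 a0star) _; rewrite lerD2l.
have rm_ge0 : 0 <= (1 - r) / 2 by rewrite divr_ge0 ?subr_ge0.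
have rp_ge0 : 0 <= (1 + r) / 2 by rewrite divr_ge0 ?addr_ge0.
have := ler_wpM2l N_ge0 (ler_wpM2l rm_ge0 a0star_norm).
have := ler_wpM2l rp_ge0 a0star_near.
lra.
Qed.

Lemma Pobj_grad_screen lam m k : 0 < lam -> (forall i, 0 <= m i) ->
  (0 < m k -> Pobj_grad lam m k = 0) -> Crow k (alpha_of m) <= lam -> m k = 0.
Proof.
move=> lam_gt0 m_ge0 grad_eq0 small; apply/le_anti; rewrite m_ge0 andbT leNgt.
apply/negP => mk_gt0; have := grad_eq0 mk_gt0; rewrite /Pobj_grad.
have : 0 < lam * eta * m k by rewrite !mulr_gt0.
lra.
Qed.

End Duality.

Theorem theorem6 (R : realType) (n K p : nat)
  (x : 'I_n -> 'I_p -> R) (d s : 'I_n -> 'I_K -> 'I_n)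
  (L U eta lam lam0 eps : R)
  (a0star a0 : pidx n K -> R) (mstar : 'I_p -> R) (k : 'I_p) :
  (0 < n)%N -> (0 < K)%N -> (0 < p)%N ->
  (forall i j, 0 <= x i j) ->
  (forall i, injective (d i)) -> (forall i, injective (s i)) ->
  0 <= U -> U <= L -> 0 < eta ->
  0 < lam -> lam <= lam0 ->
  (* alpha0* is the optimal solution of max_{alpha >= 0} D_{lam0}(alpha) *)
  (forall q, 0 <= a0star q) ->
  (forall a : pidx n K -> R, (forall q, 0 <= a q) ->
     Dobj x d s L U eta lam0 a <= Dobj x d s L U eta lam0 a0star) ->
  0 <= eps ->
  norm2_q (fun q => a0 q - a0star q) <= eps ->
  (* m* is the optimal solution of min_{m >= 0} P_lam(m) *)
  (forall j, 0 <= mstar j) ->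
  (forall m : 'I_p -> R, (forall j, 0 <= m j) ->
     Pobj x d s L U eta lam mstar <= Pobj x d s L U eta lam m) ->
  lambda_a x d s lam0 eps a0 k <= lam ->
  mstar k = 0.
Proof.
move=> _ _ _ _ _ _ _ _ eta_gt0 lam_gt0 le_lam a0star_ge0 a0star_max _ a0_near
  mstar_ge0 mstar_min lam_a_le.
have [_ grad_eq0] := Pobj_min_kkt mstar_ge0 mstar_min k.
apply: (Pobj_grad_screen eta_gt0 lam_gt0 mstar_ge0 grad_eq0).
apply: (screening_bound lam_gt0 le_lam (Crow_le_norm x d s k a0) lam_a_le).
have alpha_max := alpha_of_dual_max eta_gt0 lam_gt0 mstar_ge0 mstar_min.
exact: (dual_max_Crow_le eta_gt0 k lam_gt0 le_lam (alpha_of_ge0 _ _ _ _ _ _) alpha_max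
  a0star_ge0 a0star_max a0_near).
Qed.
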